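(* Let $N\ge 2$. (Complex case.) Let $R$ be an $N\times N$ complex correlation matrix (Hermitian positive definite with unit diagonal), with Cholesky factorisation $R=LL^*$, $L$ lower triangular with positive diagonal, and let $\theta_{jp}\in(0,\pi)$ ($2\le j\le N$, $1\le p\le 2j-2$) be the angles with $$l_{jk}=\left(\cos\theta_{j,2k-1}+i\cos\theta_{j,2k}\sin\theta_{j,2k-1}\right)\prod_{p=1}^{2k-2}\sin\theta_{jp}\ (1\le k\le j-1),\qquad l_{jj}=\prod_{p=1}^{2j-2}\sin\theta_{jp}.$$ For $1\le k<j\le N$, let $R_{11}$ be the leading $(k-1)\times(k-1)$ principal block of $R$, $R/R_{11}=R_{22}-R_{21}R_{11}^{-1}R_{12}$ the Schur complement (indexed by $k,\dots,N$; equal to $R$ if $k=1$), and $\rho_{jk|\{1,\dots,k-1\}}=(R/R_{11})_{jk}\big/\big((R/R_{11})_{jj}(R/R_{11})_{kk}\big)^{1/2}$. Then $$\rho_{jk|\{1,\dots,k-1\}}=\cos\theta_{j,2k-1}+i\cos\theta_{j,2k}\sin\theta_{j,2k-1}.$$ (Quaternion case.) Let $R$ be an $N\times N$ quaternion correlation matrix, i.e. a $2N\times2N$ complex Hermitian positive definite matrix composed of $2\times 2$ blocks of the form $\begin{bmatrix}z&w\\-\bar w&\bar z\end{bmatrix}$ with diagonal blocks $I_2$, with block Cholesky factorisation $R=LL^*$, $L$ block lower triangular of the same block form with diagonal blocks $l_{jj}I_2$, $l_{jj}>0$. For an off-diagonal block $l_{jk}$ with parameters $(z,w)$ write $l^{(1)}_{jk}=\mathrm{Re}\,z$,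 $l^{(2)}_{jk}=\mathrm{Im}\,z$, $l^{(3)}_{jk}=\mathrm{Re}\,w$, $l^{(4)}_{jk}=\mathrm{Im}\,w$, and let $\theta_{jp}\in(0,\pi)$ ($2\le j\le N$, $1\le p\le 4j-4$) be the angles with $$l_{jk}^{(s)}=\cos\theta_{j,4(k-1)+s}\left(\prod_{m=1}^{s-1}\sin\theta_{j,4(k-1)+m}\right)\prod_{p=1}^{4(k-1)}\sin\theta_{jp}\ (1\le k\le j-1,\,1\le s\le4),\qquad l_{jj}=\prod_{p=1}^{4(j-1)}\sin\theta_{jp}.$$ For $1\le k<j\le N$ define the $2\times2$ block $\rho_{jk|\{1,\dots,k-1\}}=(R/R_{11})_{jk}\big/\big((R/R_{11})_{jj}(R/R_{11})_{kk}\big)^{1/2}$, where $R_{11}$ is the leading $2(k-1)\times2(k-1)$ principal block, $(R/R_{11})_{jk}$ denotes the $(j,k)$ $2\times2$ block of the Schur complement $R/R_{11}$, and the diagonal blocks $(R/R_{11})_{jj}$, $(R/R_{11})_{kk}$ are positive scalar multiples of $I_2$ (identified with those scalars). Then $$\rho_{jk|\{1,\dots,k-1\}}=\begin{bmatrix}z_{jk}&w_{jk}\\-\bar w_{jk}&\bar z_{jk}\end{bmatrix},$$ with $z_{jk}=\cos\theta_{j,4k-3}+i\cos\theta_{j,4k-2}\sin\theta_{j,4k-3}$ and $w_{jk}=\left(\cos\theta_{j,4k-1}+i\cos\theta_{j,4k}\sin\theta_{j,4k-1}\right)\sin\theta_{j,4k-3}\sin\theta_{j,4k-2}$.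
   Context: Empty products equal $1$; $L^*$ denotes conjugate transpose. The angles in each row are uniquely determined since each row of real coordinates of $L$ is a unit vector with positive last coordinate $l_{jj}$. *)

From mathcomp Require Import all_boot all_order all_algebra.
From mathcomp Require Export complex.
From mathcomp Require Export reals trigo.
Set Implicit Arguments. Unset Strict Implicit. Unset Printing Implicit Defensive.
Import Order.TTheory GRing.Theory Num.Theory.
Local Open Scope ring_scope.
Local Open Scope complex_scope.

(* Matrix indices are 0-based ordinals: the paper's index j (1-based)      *)
(* corresponds to the ordinal of value j-1.  Angle indices p stay 1-based. *)

Section Defs.
Variable R : realType.
Local Notation C := R[i].

Definition ctr m n (M : 'M[C]_(m, n)) : 'M[C]_(n, m) := (map_mx Num.conj M)^T.

Definition is_hermitian n (M : 'M[C]_n) : Prop := ctr M = M.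

Definition posdef n (M : 'M[C]_n) : Prop :=
  forall v : 'cV[C]_n, v != 0 -> 0 < (ctr v *m M *m v) 0 0.

Definition lead_blk (n m : nat) (le : (m <= n)%N) (M : 'M[C]_n) : 'M[C]_m :=
  \matrix_(a < m, b < m) M (widen_ord le a) (widen_ord le b).

(* Matrix whose rows/columns of index >= m carry the Schur complement
   R/R11 = R22 - R21 R11^{-1} R12, R11 the leading m x m block
   (indices of R/R11 are those of R, i.e. m, ..., n-1 in 0-based form). *)
Definition schur (n m : nat) (le : (m <= n)%N) (M : 'M[C]_n) : 'M[C]_n :=
  M - (\matrix_(i < n, a < m) M i (widen_ord le a)) *m invmx (lead_blk le M)
      *m (\matrix_(a < m, j < n) M (widen_ord le a) j).

(* k : 'I_N (0-based) gives the size of the leading block R11 *)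
Lemma ord_le N (k : 'I_N) : (k <= N)%N.
Proof. exact: ltnW (ltn_ord k). Qed.

Lemma ord_le2 N (k : 'I_N) : (k * 2 <= N * 2)%N.
Proof. by rewrite leq_mul2r ord_le orbT. Qed.

Lemma bidx_lt N (j : 'I_N) (a : 'I_2) : (j * 2 + a < N * 2)%N.
Proof.
have hj := ltn_ord j; have ha := ltn_ord a.
rewrite -[(N * 2)%N]/(N * 2)%N.
have : (j.+1 * 2 <= N * 2)%N by rewrite leq_mul2r hj orbT.
by rewrite mulSn; move: ha; case: (nat_of_ord a) => [|[|]] //= _ h; apply: leq_trans h; rewrite addnC ?ltn_add2l ?leq_add2r //.
Qed.

Definition bidx N (j : 'I_N) (a : 'I_2) : 'I_(N * 2) := Ordinal (bidx_lt j a).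

Definition blk N (M : 'M[C]_(N * 2)) (j k : 'I_N) : 'M[C]_2 :=
  \matrix_(a < 2, b < 2) M (bidx j a) (bidx k b).

Definition qblock (z w : C) : 'M[C]_2 :=
  \matrix_(a < 2, b < 2)
    if a == ord0 then (if b == ord0 then z else w)
    else (if b == ord0 then - w^* else z^*).

End Defs.

(* The Schur complement of the leading m x m block of a Gram matrix L L^*,
   L lower triangular with nonzero diagonal, is the Gram matrix of the columns
   of L of index >= m.  Hence (R/R11)_jk = l_jk conj(l_kk), (R/R11)_kk = l_kk^2
   and (R/R11)_jj = 1 - sum_(c<k) |l_jc|^2.  In hyperspherical coordinates
   |l_jc|^2 = P_c^2 - P_(c+1)^2, where P_c is the product of the sines of the
   angles of row j that precede column c, so the sum telescopes to
   (R/R11)_jj = P_k^2, and l_jk l_kk / (P_k l_kk) is the angular factor of l_jk.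
   The quaternion case is the same computation on 2 x 2 blocks, using that the
   diagonal blocks of L are scalar. *)

From mathcomp Require Import all_boot all_order all_algebra.
From mathcomp Require Import complex reals trigo.
From mathcomp Require Import zify ring.
Set Implicit Arguments. Unset Strict Implicit. Unset Printing Implicit Defensive.
Import Order.TTheory GRing.Theory Num.Theory.
Local Open Scope ring_scope.
Local Open Scope complex_scope.

Section ComplexConj.
Variable R : realType.

Lemma conjC_complex (x : R[i]) : Num.conj x = conjc x.
Proof.
have [->|x_neq0] := eqVneq x 0; first by rewrite conjC0 conjc0.
apply: (mulfI x_neq0); rewrite -normCK -add_Re2_Im2.
by case: x {x_neq0} => a b; apply/eqP; rewrite eq_complex /=; apply/andP; split; apply/eqP; ring.
Qed.

Lemma conjC_realc (x : R) : Num.conj x%:C = x%:C.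
Proof. by rewrite conjC_complex conjc_real. Qed.

End ComplexConj.

Lemma ctrE (R : realType) m n (M : 'M[R[i]]_(m, n)) i j : ctr M i j = Num.conj (M j i).
Proof. by rewrite !mxE. Qed.

Section GramSchur.
Variables (R : realType) (n m : nat) (le_mn : (m <= n)%N) (L : 'M[R[i]]_n).
Hypothesis L_lower : forall i j : 'I_n, (i < j)%N -> L i j = 0.
Hypothesis L_diag : forall i : 'I_n, L i i != 0.

Local Notation w := (widen_ord le_mn).
Local Notation G := (L *m ctr L).

Lemma gram_split (a b : 'I_n) : G a b =
  \sum_(c < m) L a (w c) * Num.conj (L b (w c))
  + \sum_(c : 'I_n | (m <= c)%N) L a c * Num.conj (L b c).
Proof.
rewrite mxE (bigID (fun c : 'I_n => (c < m)%N)) /= big_ord_narrow.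
congr (_ + _); first by apply: eq_bigr => c _; rewrite ctrE.
by apply: eq_big => [c | c _]; [rewrite -leqNgt | rewrite ctrE].
Qed.

Lemma gram_lead (a b : 'I_n) : ((a < m) || (b < m))%N ->
  G a b = \sum_(c < m) L a (w c) * Num.conj (L b (w c)).
Proof.
move=> ab_lt; rewrite gram_split [X in _ + X]big1 ?addr0 // => c le_mc.
case/orP: ab_lt => lt_m; last by rewrite [L b c]L_lower ?conjC0 ?mulr0 //; lia.
by rewrite L_lower ?mul0r //; lia.
Qed.

Lemma schur_gram_head (a b : 'I_n) : schur le_mn G a b =
  G a b - \sum_(c < m) L a (w c) * Num.conj (L b (w c)).
Proof.
pose Lm := \matrix_(i < n, c < m) L i (w c); pose L11 := lead_blk le_mn L.
have gram_cols : \matrix_(i < n, c < m) G i (w c) = Lm *m ctr L11.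
  apply/matrixP => i c; rewrite [LHS]mxE gram_lead; last by rewrite /= ltn_ord orbT.
  by rewrite mxE; apply: eq_bigr => d _; rewrite !mxE.
have gram_rows : \matrix_(i < m, j < n) G (w i) j = L11 *m ctr Lm.
  apply/matrixP => r s; rewrite [LHS]mxE gram_lead; last by rewrite /= ltn_ord.
  by rewrite mxE; apply: eq_bigr => d _; rewrite !mxE.
have gram_lead_blk : lead_blk le_mn G = L11 *m ctr L11.
  apply/matrixP => r s; rewrite [LHS]mxE gram_lead; last by rewrite /= ltn_ord.
  by rewrite mxE; apply: eq_bigr => e _; rewrite !mxE.
have L11_unit : L11 \in unitmx.
  rewrite unitmxE det_trig; last by apply/is_trig_mxP => c d lt_cd; rewrite mxE L_lower.
  by rewrite unitfE; apply/prodf_neq0 => c _; rewrite mxE.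
have L11ctr_unit : ctr L11 \in unitmx by rewrite unitmx_tr map_unitmx.
have gram11_unit : L11 *m ctr L11 \in unitmx by rewrite unitmx_mul L11_unit.
have schur_term : Lm *m ctr L11 *m invmx (L11 *m ctr L11) *m (L11 *m ctr Lm) = Lm *m ctr Lm.
  by rewrite -{1}(mulKmx L11_unit (ctr L11)) [Lm *m _]mulmxA (mulmxK gram11_unit) -mulmxA mulKmx.
rewrite /schur gram_cols gram_rows gram_lead_blk schur_term !mxE.
by congr (_ - _); apply: eq_bigr => c _; rewrite !mxE.
Qed.

Lemma schur_gram_tail (a b : 'I_n) :
  schur le_mn G a b = \sum_(c : 'I_n | (m <= c)%N) L a c * Num.conj (L b c).
Proof. by rewrite schur_gram_head gram_split addrAC subrr add0r. Qed.

Lemma schur_gram_col (a b : 'I_n) : (m <= b)%N ->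
  (forall c : 'I_n, (m <= c)%N -> c != b -> L b c = 0) ->
  schur le_mn G a b = L a b * Num.conj (L b b).
Proof.
move=> le_mb row_b; rewrite schur_gram_tail (bigD1 b) //= big1 ?addr0 // => c /andP[le_mc neq_cb].
by rewrite row_b // conjC0 mulr0.
Qed.

End GramSchur.

Lemma sumr_telescope_ord (V : zmodType) (u : nat -> V) k :
  \sum_(c < k) (u c - u c.+1) = u 0%N - u k.
Proof.
rewrite -(big_mkord xpredT (fun c => u c - u c.+1)).
rewrite (@telescope_sumr_eq V 0%N k (fun c => - u c)) //.
  by rewrite addrC opprK.
by move=> c _; rewrite addrC opprK.
Qed.

Section SphericalCoordinates.
Variable R : realType.

Definition sphC (a b : R) : R[i] := (cos a)%:C + 'i * (cos b * sin a)%:C.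

Lemma sphC_scaled_normK a b x :
  sphC a b * x%:C * Num.conj (sphC a b * x%:C) = (x ^+ 2 - (x * sin a * sin b) ^+ 2)%:C.
Proof.
have cos2 t : cos t ^+ 2 = 1 - sin t ^+ 2 by rewrite -(cos2Dsin2 t) addrK.
rewrite conjC_complex /sphC; apply/eqP; rewrite eq_complex /=.
apply/andP; split; apply/eqP; last by ring.
transitivity (x ^+ 2 * (cos a ^+ 2 + cos b ^+ 2 * sin a ^+ 2)); first by ring.
by rewrite !cos2; ring.
Qed.

Lemma prodr_nat_recr2 (F : nat -> R) n :
  \prod_(1 <= p < n.+3) F p = \prod_(1 <= p < n.+1) F p * F n.+1 * F n.+2.
Proof. by rewrite big_nat_recr // big_nat_recr. Qed.

Lemma prod_sin_gt0 (f : nat -> R) n :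
  (forall p, (1 <= p <= n)%N -> 0 < f p < pi) -> 0 < \prod_(1 <= p < n.+1) sin (f p).
Proof.
move=> f_range; rewrite big_nat_cond; apply: prodr_gt0 => p /andP[/andP[p_ge1 lt_pn] _].
by apply/sin_gt0_pi/f_range; rewrite p_ge1.
Qed.

Lemma qblock_coords_sphC (f : nat -> R) n x :
  let l s := cos (f (n + s)%N) * (\prod_(1 <= m < s) sin (f (n + m)%N)) * x in
  qblock ((l 1%N)%:C + 'i * (l 2%N)%:C) ((l 3%N)%:C + 'i * (l 4%N)%:C)
  = qblock (sphC (f n.+1) (f n.+2) * x%:C)
           (sphC (f n.+3) (f n.+4) * (sin (f n.+1) * sin (f n.+2) * x)%:C).
Proof.
have prod1 : \prod_(1 <= m < 1) sin (f (n + m)%N) = 1 by rewrite big_geq.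
have prodS s : \prod_(1 <= m < s.+2) sin (f (n + m)%N)
    = \prod_(1 <= m < s.+1) sin (f (n + m)%N) * sin (f (n + s.+1)%N).
  by rewrite big_nat_recr.
cbv zeta beta; rewrite !prodS prod1 !addn1 !addn2 !addn3 !addn4 /sphC.
by congr qblock; apply/eqP; rewrite eq_complex /=; apply/andP; split; apply/eqP; ring.
Qed.

Lemma sqrtC_sqr_realcM (x y : R) : 0 <= x -> 0 <= y ->
  sqrtC ((x ^+ 2)%:C * (y%:C * y%:C)) = x%:C * y%:C.
Proof.
move=> x_ge0 y_ge0; rewrite rmorphXn -expr2 -exprMn sqrCK //.
by rewrite mulr_ge0 // ler0c.
Qed.

Lemma realcV_mulK (x : R) (z : R[i]) : x != 0 -> (x^-1)%:C * (z * x%:C) = z.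
Proof. by move=> x_neq0; rewrite mulrC -mulrA -rmorphM mulfV // rmorph1 mulr1. Qed.

Lemma scale_qblock_real (x : R) z w : x%:C *: qblock z w = qblock (x%:C * z) (x%:C * w).
Proof.
apply/matrixP => a b; rewrite !mxE ?conjC_complex; case: z w => [z1 z2] [w1 w2].
by case: ifP => _; case: ifP => _; apply/eqP; rewrite eq_complex /=; apply/andP; split; apply/eqP; ring.
Qed.

End SphericalCoordinates.

Lemma bidx_onto N (i : 'I_(N * 2)) : exists j a, i = @bidx N j a.
Proof.
have lt_iN : (i %/ 2 < N)%N by rewrite ltn_divLR.
exists (Ordinal lt_iN), (Ordinal (ltn_pmod i (isT : (0 < 2)%N))).
by apply: val_inj; rewrite /= -divn_eq.
Qed.

Lemma sum_widen_pairs (V : nmodType) N k (le_kN : (k <= N)%N) (le_k2 : (k * 2 <= N * 2)%N)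
    (F : 'I_(N * 2) -> V) :
  \sum_(c < k * 2) F (widen_ord le_k2 c)
  = \sum_(c < k) (F (bidx (widen_ord le_kN c) ord0) + F (bidx (widen_ord le_kN c) ord_max)).
Proof.
(* extend F by 0 beyond N * 2 to reindex over nat *)
pose g c := oapp F 0 (insub c : option 'I_(N * 2)).
have gE (i : 'I_(N * 2)) : F i = g i by rewrite /g valK.
rewrite (eq_bigr (fun c : 'I_(k * 2) => g c)) => [|c _]; last by rewrite gE.
rewrite (eq_bigr (fun c : 'I_k => g (c * 2)%N + g (c * 2).+1)) => [|c _]; last first.
  by rewrite !gE /= addn0 addn1.
elim: k {le_kN le_k2} => [|k IH]; first by rewrite !big_ord0.
rewrite [RHS]big_ord_recr /= -IH mulSnr addn2.
by rewrite !big_ord_recr addrA.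
Qed.

Lemma blkE (R : realType) N (M : 'M[R[i]]_(N * 2)) j k a b :
  blk M j k a b = M (bidx j a) (bidx k b).
Proof. by rewrite mxE. Qed.

Section BlockLowerTriangular.
Variables (R : realType) (N : nat) (L : 'M[R[i]]_(N * 2)).
Hypothesis L_blk_lower : forall j k : 'I_N, (j < k)%N -> blk L j k = 0.
Hypothesis L_blk_diag : forall j : 'I_N, exists l : R, 0 < l /\ blk L j j = (l%:C)%:M.

Lemma blk_diag_offdiag (k : 'I_N) (a b : 'I_2) : a != b -> L (bidx k a) (bidx k b) = 0.
Proof.
by move=> neq_ab; have [l [_ L_kk]] := L_blk_diag k; rewrite -blkE L_kk mxE (negPf neq_ab).
Qed.

Lemma blk_lower_lower (a b : 'I_(N * 2)) : (a < b)%N -> L a b = 0.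
Proof.
have [j [x ->]] := bidx_onto a; have [k [y ->]] := bidx_onto b; rewrite /= => lt_ab.
have [lt_jk | lt_kj | /val_inj eq_jk] := ltngtP j k.
- by rewrite -blkE L_blk_lower // mxE.
- by move: lt_ab (ltn_ord x) (ltn_ord y); lia.
- subst k; apply: blk_diag_offdiag; rewrite -val_eqE /=.
  by move: lt_ab; lia.
Qed.

Lemma blk_diag_neq0 (i : 'I_(N * 2)) : L i i != 0.
Proof.
have [j [x ->]] := bidx_onto i; have [l [l_gt0 L_jj]] := L_blk_diag j.
by rewrite -blkE L_jj mxE eqxx mulr1n fmorph_eq0 gt_eqF.
Qed.

Lemma blk_diag_row_tail (k : 'I_N) (x : 'I_2) (c : 'I_(N * 2)) :
  (k * 2 <= c)%N -> c != bidx k x -> L (bidx k x) c = 0.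
Proof.
move=> le_kc neq_c; have [lt_xc | lt_cx | eq_c] := ltngtP (bidx k x) c.
- exact: blk_lower_lower.
- have [j [y def_c]] := bidx_onto c; subst c.
  have eq_jk : j = k by apply: val_inj; move: le_kc lt_cx (ltn_ord x) (ltn_ord y) => /=; lia.
  subst j; apply: blk_diag_offdiag; rewrite -val_eqE; move: lt_cx => /=; lia.
- by move/val_inj: eq_c neq_c => ->; rewrite eqxx.
Qed.

End BlockLowerTriangular.

Lemma complex_partial_correlation (R : realType) N (L : 'M[R[i]]_N) (f : nat -> R)
    (j k : 'I_N) :
  (forall a b : 'I_N, (a < b)%N -> L a b = 0) ->
  (forall i : 'I_N, exists l : R, 0 < l /\ L i i = l%:C) ->
  (L *m ctr L) j j = 1 ->
  (forall p, (1 <= p <= 2 * k)%N -> 0 < f p < pi) ->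
  (forall c : 'I_N, (c <= k)%N ->
     L j c = sphC (f (2 * c).+1) (f (2 * c).+2) * (\prod_(1 <= p < (2 * c).+1) sin (f p))%:C) ->
  (k < j)%N ->
  let S := schur (ord_le k) (L *m ctr L) in
  S j k / sqrtC (S j j * S k k) = sphC (f (2 * k).+1) (f (2 * k).+2).
Proof.
move=> L_lower L_diag G_jj f_range L_row lt_kj S.
have L_neq0 i : L i i != 0 by have [l [l_gt0 ->]] := L_diag i; rewrite fmorph_eq0 gt_eqF.
have [l [l_gt0 L_kk]] := L_diag k.
pose P n := \prod_(1 <= p < n.+1) sin (f p).
have P_gt0 : 0 < P (2 * k)%N by apply: prod_sin_gt0.
have row_k (c : 'I_N) : (k <= c)%N -> c != k -> L k c = 0.
  by move=> le_kc neq_ck; apply: L_lower; rewrite ltn_neqAle le_kc andbT eq_sym.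
have S_col (a : 'I_N) : S a k = L a k * l%:C.
  by rewrite /S schur_gram_col // L_kk conjC_realc.
have S_jj : S j j = (P (2 * k)%N ^+ 2)%:C.
  pose u n := (P (2 * n)%N ^+ 2)%:C : R[i].
  rewrite /S schur_gram_head // G_jj (eq_bigr (fun c : 'I_k => u c - u c.+1)).
    by rewrite sumr_telescope_ord /u /P big_geq // expr1n opprB addrC subrK.
  move=> c _; rewrite L_row /=; last exact: ltnW.
  by rewrite sphC_scaled_normK /u /P mulnS add2n prodr_nat_recr2 rmorphB.
rewrite S_col S_jj S_col L_kk L_row // sqrtC_sqr_realcM ?ltW // /P -(mulrA (sphC _ _)) mulfK //.
by rewrite mulf_neq0 // fmorph_eq0 gt_eqF.
Qed.

Lemma quaternion_partial_correlation (R : realType) N (L : 'M[R[i]]_(N * 2)) (f : nat -> R)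
    (j k : 'I_N) :
  (forall a b : 'I_N, (a < b)%N -> blk L a b = 0) ->
  (forall i : 'I_N, exists l : R, 0 < l /\ blk L i i = (l%:C)%:M) ->
  (L *m ctr L) (bidx j ord0) (bidx j ord0) = 1 ->
  (forall p, (1 <= p <= 4 * k)%N -> 0 < f p < pi) ->
  (forall c : 'I_N, (c <= k)%N ->
     blk L j c = qblock
       (sphC (f (4 * c).+1) (f (4 * c).+2) * (\prod_(1 <= p < (4 * c).+1) sin (f p))%:C)
       (sphC (f (4 * c).+3) (f (4 * c).+4)
        * (sin (f (4 * c).+1) * sin (f (4 * c).+2) * \prod_(1 <= p < (4 * c).+1) sin (f p))%:C)) ->
  (k < j)%N ->
  let S := schur (ord_le2 k) (L *m ctr L) in
  let s (i : 'I_N) := S (bidx i ord0) (bidx i ord0) in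
  (sqrtC (s j * s k))^-1 *: blk S j k
  = qblock (sphC (f (4 * k).+1) (f (4 * k).+2))
           (sphC (f (4 * k).+3) (f (4 * k).+4) * (sin (f (4 * k).+1) * sin (f (4 * k).+2))%:C).
Proof.
move=> L_lower L_diag G_jj f_range L_row lt_kj S s.
have [l [l_gt0 L_kk]] := L_diag k.
have L_kk_diag (x : 'I_2) : L (bidx k x) (bidx k x) = l%:C.
  by rewrite -blkE L_kk mxE eqxx.
have S_col (a : 'I_(N * 2)) (x : 'I_2) : S a (bidx k x) = L a (bidx k x) * l%:C.
  rewrite /S schur_gram_col ?L_kk_diag ?conjC_realc //.
  - exact: blk_lower_lower.
  - exact: blk_diag_neq0.
  - by rewrite /= leq_addr.
  - exact: blk_diag_row_tail.
pose P n := \prod_(1 <= p < n.+1) sin (f p).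
have P_gt0 : 0 < P (4 * k)%N by apply: prod_sin_gt0.
have s_j : s j = (P (4 * k)%N ^+ 2)%:C.
  pose u n := (P (4 * n)%N ^+ 2)%:C : R[i].
  rewrite /s /S schur_gram_head; last 2 first.
  - exact: blk_lower_lower.
  - exact: blk_diag_neq0.
  pose row_j c := L (bidx j ord0) c * Num.conj (L (bidx j ord0) c).
  rewrite G_jj (sum_widen_pairs (ord_le k) (ord_le2 k) row_j) (eq_bigr (fun c : 'I_k => u c - u c.+1)).
    by rewrite sumr_telescope_ord /u /P big_geq // expr1n opprB addrC subrK.
  move=> c _; rewrite /row_j -!blkE L_row /=; last exact: ltnW.
  rewrite !mxE /= !sphC_scaled_normK /u /P mulnS add4n !prodr_nat_recr2.
  by rewrite -rmorphD -rmorphB /=; congr _%:C; ring.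
have s_k : s k = l%:C * l%:C by rewrite /s (S_col _ ord0) L_kk_diag.
have blk_S : blk S j k = l%:C *: blk L j k.
  by apply/matrixP => a b; rewrite blkE (S_col _ b) [RHS]mxE blkE mulrC.
have inv_scale : (sqrtC (s j * s k))^-1 * l%:C = ((P (4 * k)%N)^-1)%:C.
  rewrite s_j s_k sqrtC_sqr_realcM ?ltW // invfM -mulrA mulVf ?mulr1 ?fmorphV //.
  by rewrite fmorph_eq0 gt_eqF.
rewrite blk_S scalerA inv_scale L_row // scale_qblock_real /P rmorphM (mulrA (sphC _ _)).
by rewrite !realcV_mulK // gt_eqF.
Qed.

Theorem mainTheorem7 (R : realType) (N : nat) (hN : (2 <= N)%N) :
  (* ---------------- complex case ---------------- *)
  (forall (Rm L : 'M[R[i]]_N) (theta : 'I_N -> nat -> R),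
     is_hermitian Rm -> posdef Rm -> (forall i, Rm i i = 1) ->
     (forall i j : 'I_N, (i < j)%N -> L i j = 0) ->
     (forall i : 'I_N, exists l : R, 0 < l /\ L i i = l%:C) ->
     Rm = L *m ctr L ->
     (forall (j : 'I_N) (p : nat), (1 <= j)%N -> (1 <= p <= 2 * j)%N ->
        0 < theta j p < pi) ->
     (forall j k : 'I_N, (1 <= j)%N -> (k < j)%N ->
        L j k = ((cos (theta j (2 * k).+1))%:C
                 + 'i * (cos (theta j (2 * k).+2) * sin (theta j (2 * k).+1))%:C)
                * (\prod_(1 <= p < (2 * k).+1) sin (theta j p))%:C) ->
     (forall j : 'I_N, (1 <= j)%N ->
        L j j = (\prod_(1 <= p < (2 * j).+1) sin (theta j p))%:C) ->
     forall j k : 'I_N, (k < j)%N ->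
       let S := schur (ord_le k) Rm in
       S j k / sqrtC (S j j * S k k)
       = (cos (theta j (2 * k).+1))%:C
         + 'i * (cos (theta j (2 * k).+2) * sin (theta j (2 * k).+1))%:C)
  /\
  (* ---------------- quaternion case ---------------- *)
  (forall (Rm L : 'M[R[i]]_(N * 2)) (theta : 'I_N -> nat -> R),
     is_hermitian Rm -> posdef Rm ->
     (forall j k : 'I_N, exists z w, blk Rm j k = qblock z w) ->
     (forall j : 'I_N, blk Rm j j = 1%:M) ->
     (forall j k : 'I_N, (j < k)%N -> blk L j k = 0) ->
     (forall j : 'I_N, exists l : R, 0 < l /\ blk L j j = (l%:C)%:M) ->
     Rm = L *m ctr L ->
     (forall (j : 'I_N) (p : nat), (1 <= j)%N -> (1 <= p <= 4 * j)%N ->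
        0 < theta j p < pi) ->
     (forall j k : 'I_N, (1 <= j)%N -> (k < j)%N ->
        let P := \prod_(1 <= p < (4 * k).+1) sin (theta j p) in
        let l (s : nat) := cos (theta j (4 * k + s)%N)
                   * (\prod_(1 <= m < s) sin (theta j (4 * k + m)%N)) * P in
        blk L j k = qblock ((l 1%N)%:C + 'i * (l 2%N)%:C)
                           ((l 3%N)%:C + 'i * (l 4%N)%:C)) ->
     (forall j : 'I_N, (1 <= j)%N ->
        blk L j j = ((\prod_(1 <= p < (4 * j).+1) sin (theta j p))%:C)%:M) ->
     forall j k : 'I_N, (k < j)%N ->
       let S := schur (ord_le2 k) Rm in
       let s (i : 'I_N) := S (bidx i ord0) (bidx i ord0) in
       (sqrtC (s j * s k))^-1 *: blk S j k
       = qblock ((cos (theta j (4 * k).+1))%:C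
                 + 'i * (cos (theta j (4 * k).+2) * sin (theta j (4 * k).+1))%:C)
                (((cos (theta j (4 * k).+3))%:C
                  + 'i * (cos (theta j (4 * k).+4) * sin (theta j (4 * k).+3))%:C)
                 * (sin (theta j (4 * k).+1) * sin (theta j (4 * k).+2))%:C)).
Proof.
split=> [Rm L theta _ _ Rm_diag L_lower L_diag Rm_eq theta_range L_row _ j k lt_kj
        |Rm L theta _ _ _ Rm_diag L_lower L_diag Rm_eq theta_range L_row _ j k lt_kj];
  subst Rm.
- apply: (complex_partial_correlation (f := theta j)) => //.
  + by move=> p /andP[p_ge1 le_p]; apply: theta_range; lia.
  + by move=> c le_ck; apply: L_row; lia.
- apply: (quaternion_partial_correlation (f := theta j)) => //.
  + by rewrite -blkE Rm_diag mxE.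
  + by move=> p /andP[p_ge1 le_p]; apply: theta_range; lia.
  + by move=> c le_ck; rewrite -qblock_coords_sphC; apply: L_row; lia.
Qed.
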